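(* Let $\varphi(x_1,\dots,x_n)$ be a formula in the language of $\mathbf{A}^{\natural}$ that has the tree property. Then for every element $b^{k}\in A^{\natural}$ there is $m\le 8$ such that $\varphi(b^{k},\dots,b^{k})=b^{m}$. Moreover, if $i\in\{1,3,4\}$, then $\varphi(b^{i},\dots,b^{i})\in\{b^1,b^3,b^4\}$.
   Context: $\mathbf{A}$ is a fixed non-trivial algebra whose set $\mathcal{F}$ of basic operations contains no constant symbols, and $h$ is a unary function on $A$. Construction of $\mathbf{A}^{\natural}$: universe is the disjoint union of eight copies $A_1,\dots,A_8$ of $A$ ($a^i$ is the copy of $a$ in $A_i$); operations: each $n$-ary $f\in\mathcal{F}$ with $f(a_1^{m_1},\dots,a_n^{m_n})=(f^{\mathbf{A}}(a_1,\dots,a_n))^5$; a ternary $\heartsuit$ with $\heartsuit(a^m,b^n,c^k)=a^1$ if $a^m=c^k$, $h(a)^5=b^n$, $m\in\{1,3,4\}$; $=a^2$ if $a^m=c^k$, $h(a)^5=b^n$, $m\in\{2,5,6,7,8\}$; $=a^4$ if $m,k\in\{1,3,4\}$ and ($a^m\ne c^k$ or $h(a)^5\ne b^n$); $=a^7$ if $\{m,k\}\cap\{2,5,6,7,8\}\ne\emptyset$ and ($a^m\ne c^k$ or $h(a)^5\ne b^n$); a unary $\Box$ with $\Box(a^m)=a^m$ for $m\in\{1,2\}$, $a^{m-1}$ for even $m\ge3$, $a^{m+1}$ for odd $m\ge3$. Subformula tree of a formula $\varphi$ of $\mathbf{A}^{\natural}$ (defined recursively): for a variable $x$, the one-node tree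 labelled $x$; for $\varphi=g(\psi_1,\dots,\psi_n)$ with $g$ a basic symbol, take the disjoint union of the subformula trees of $\psi_1,\dots,\psi_n$, relabel the root of the tree of $\psi_i$ by $\langle\psi_i,i\rangle$, and add a common new root labelled $\varphi$. A formula $\varphi$ has the tree property if every node of its subformula tree whose label is a formula with principal symbol in $\mathcal{F}$ (possibly paired with a natural number) is either equal to or has as an ancestor a node labelled $\langle\beta,2\rangle$ whose immediate predecessor (parent) is labelled $\heartsuit(\alpha,\beta,\gamma)$ or $\langle\heartsuit(\alpha,\beta,\gamma),n\rangle$ for some $n$. *)

From mathcomp Require Import all_boot.
From Stdlib Require Import ClassicalEpsilon.

Set Implicit Arguments.
Unset Strict Implicit.
Unset Printing Implicit Defensive.

Inductive copy := C1 | C2 | C3 | C4 | C5 | C6 | C7 | C8.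

Definition copy_num (m : copy) : nat :=
  match m with C1 => 1 | C2 => 2 | C3 => 3 | C4 => 4
             | C5 => 5 | C6 => 6 | C7 => 7 | C8 => 8 end.

Definition in134 (m : copy) : bool :=
  match m with C1 | C3 | C4 => true | _ => false end.

Section Natural.
Variables (A : Type) (Fsym : Type) (ar : Fsym -> nat).
Variable (fA : forall f : Fsym, ('I_(ar f) -> A) -> A).
Variable (h : A -> A).

(* Universe of A^natural : pairs (a, m) standing for a^m. *)
Definition U := (A * copy)%type.

Definition dec (P : Prop) : bool :=
  if excluded_middle_informative P then true else false.

Definition opF (f : Fsym) (args : 'I_(ar f) -> U) : U :=
  (fA (fun i => (args i).1), C5).

Definition heart (x y z : U) : U :=
  let: (a, m) := x in
  let: (_, k) := z in
  if dec (x = z /\ (h a, C5) = y) then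
    (if in134 m then (a, C1) else (a, C2))
  else if in134 m && in134 k then (a, C4) else (a, C7).

Definition box (x : U) : U :=
  let: (a, m) := x in
  match m with
  | C1 => (a, C1) | C2 => (a, C2)
  | C3 => (a, C4) | C4 => (a, C3)
  | C5 => (a, C6) | C6 => (a, C5)
  | C7 => (a, C8) | C8 => (a, C7)
  end.
End Natural.

Inductive term (Fsym : Type) (ar : Fsym -> nat) : Type :=
| Tvar : nat -> term ar
| TF : forall f : Fsym, ('I_(ar f) -> term ar) -> term ar
| Theart : term ar -> term ar -> term ar -> term ar
| Tbox : term ar -> term ar.

Section Terms.
Variables (A : Type) (Fsym : Type) (ar : Fsym -> nat).
Variable (fA : forall f : Fsym, ('I_(ar f) -> A) -> A).
Variable (h : A -> A).

Fixpoint eval (v : nat -> U A) (t : term ar) : U A :=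
  match t with
  | Tvar x => v x
  | TF f args => opF fA (fun i => eval v (args i))
  | Theart t1 t2 t3 => heart h (eval v t1) (eval v t2) (eval v t3)
  | Tbox t1 => box (eval v t1)
  end.

(* The i-th immediate subformula (1-based), i.e. the child of the node
   in the subformula tree labelled <psi_i, i>. *)
Definition child (t : term ar) (i : nat) : option (term ar) :=
  match t with
  | Tvar _ => None
  | TF f args => if i == 0 then None else omap args (insub i.-1)
  | Theart t1 t2 t3 =>
      match i with 1 => Some t1 | 2 => Some t2 | 3 => Some t3 | _ => None end
  | Tbox t1 => match i with 1 => Some t1 | _ => None end
  end.

(* Nodes of the subformula tree are addressed by paths (lists of child
   indices) from the root; subterm_at t p is the formula labelling node p. *)
Fixpoint subterm_at (t : term ar) (p : seq nat) : option (term ar) :=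
  match p with
  | [::] => Some t
  | i :: p' => match child t i with
               | Some c => subterm_at c p'
               | None => None
               end
  end.

Definition is_node (t : term ar) (p : seq nat) := subterm_at t p <> None.

Definition is_F_formula (t : term ar) : bool :=
  if t is TF _ _ then true else false.

Definition is_heart (t : term ar) : bool :=
  if t is Theart _ _ _ then true else false.

(* Tree property: every node labelled by a formula with principal symbol in F
   is equal to, or has as an ancestor, a node with index 2 whose parent is
   labelled by a heart-formula.  The node rcons q 2 is such a node (with
   parent q), and it is equal to or an ancestor of node p iff it is a prefix
   of p. *)
Definition tree_property (phi : term ar) : Prop :=
  forall (p : seq nat) (psi : term ar),
    subterm_at phi p = Some psi -> is_F_formula psi ->
    exists q : seq nat, exists alpha beta gamma : term ar,
      prefix (rcons q 2) p /\
      subterm_at phi q = Some (Theart alpha beta gamma).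
End Terms.

From mathcomp Require Import all_boot.

(* Along a branch of the subformula tree that never enters the second
   argument of a heart, the tree property forbids symbols of F, so only heart
   and box occur there.  Both operations keep the underlying element of
   their first argument and send copies with index in {1,3,4} to such copies;
   the second argument of a heart only influences which case applies, never
   the element or the membership of the index in {1,3,4}. *)

Set Implicit Arguments.
Unset Strict Implicit.
Unset Printing Implicit Defensive.

Section Spine.
Variables (Fsym : Type) (ar : Fsym -> nat).

Fixpoint F_free_spine (t : term ar) : bool :=
  match t with
  | Tvar _ => true
  | TF _ _ => false
  | Theart t1 _ t3 => F_free_spine t1 && F_free_spine t3
  | Tbox t1 => F_free_spine t1
  end.

Lemma tree_property_child (t c : term ar) (i : nat) :
  i != 2 -> child t i = Some c -> tree_property t -> tree_property c.
Proof.
move=> i_neq2 t_i tp_t p psi c_p F_psi.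
have t_ip : subterm_at t (i :: p) = Some psi by rewrite /= t_i.
have [[|j q] [al [be [ga [pre_ip t_q]]]]] := tp_t _ _ t_ip F_psi.
  by move: pre_ip; rewrite /= eq_sym (negbTE i_neq2).
move: pre_ip t_q; rewrite /=; case: eqP => // -> pre_p.
by rewrite t_i => c_q; exists q, al, be, ga.
Qed.

Lemma tree_property_F_free_spine (t : term ar) :
  tree_property t -> F_free_spine t.
Proof.
elim: t => [?|f args _|t1 IH1 t2 _ t3 IH3|t1 IH1] //= tp_t.
- by have [[|? ?] [? [? [? []]]]] := tp_t [::] (TF args) erefl erefl.
- apply/andP; split; [apply: IH1 | apply: IH3].
  + exact: (tree_property_child (i:=1) _ _ tp_t).
  + exact: (tree_property_child (i:=3) _ _ tp_t).
- by apply: IH1; exact: (tree_property_child (i:=1) _ _ tp_t).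
Qed.

End Spine.

Section Evaluation.
Variables (A : Type) (h : A -> A).

Lemma heart_fst (x y z : U A) : (heart h x y z).1 = x.1.
Proof. by case: x z => a m [? ?]; rewrite /heart; case: dec; case: ifP. Qed.

Lemma box_fst (x : U A) : (box x).1 = x.1.
Proof. by case: x => a []. Qed.

Lemma in134_heart (x y z : U A) :
  in134 x.2 -> in134 z.2 -> in134 (heart h x y z).2.
Proof.
case: x z => a m [c k] /= m134 k134.
by rewrite /heart; case: dec; rewrite /= ?m134 ?k134.
Qed.

Lemma in134_box (x : U A) : in134 x.2 -> in134 (box x).2.
Proof. by case: x => a []. Qed.

Variables (Fsym : Type) (ar : Fsym -> nat).
Variables (fA : forall f : Fsym, ('I_(ar f) -> A) -> A) (v : nat -> U A).

Lemma F_free_spine_eval_fst (b : A) (t : term ar) :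
  F_free_spine t -> (forall x, (v x).1 = b) -> (eval fA h v t).1 = b.
Proof.
move=> + v_b; elim: t => [n|f args _|t1 IH1 t2 _ t3 _|t1 IH1] //=.
- by rewrite heart_fst => /andP[/IH1].
- by rewrite box_fst.
Qed.

Lemma F_free_spine_eval_in134 (t : term ar) :
  F_free_spine t -> (forall x, in134 (v x).2) -> in134 (eval fA h v t).2.
Proof.
move=> + v134; elim: t => [n|f args _|t1 IH1 t2 _ t3 IH3|t1 IH1] //=.
- by move=> /andP[/IH1 ? /IH3 ?]; exact: in134_heart.
- by move=> /IH1; exact: in134_box.
Qed.

End Evaluation.

Theorem lemma6p3
  (A : Type) (Fsym : Type) (ar : Fsym -> nat)
  (fA : forall f : Fsym, ('I_(ar f) -> A) -> A) (h : A -> A)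
  (A_nontrivial : exists a1 a2 : A, a1 <> a2)
  (no_constants : forall f : Fsym, 0 < ar f)
  (phi : term ar) (Hphi : tree_property phi) :
  forall (b : A) (k : copy),
    (exists m : copy, copy_num m <= 8 /\
       eval fA h (fun _ => (b, k)) phi = (b, m)) /\
    (in134 k -> exists m : copy, in134 m /\
       eval fA h (fun _ => (b, k)) phi = (b, m)).
Proof.
move=> b k.
have spine := tree_property_F_free_spine Hphi.
have fst_b : (eval fA h (fun=> (b, k)) phi).1 = b.
  exact: F_free_spine_eval_fst.
have in134_val : in134 k -> in134 (eval fA h (fun=> (b, k)) phi).2.
  by move=> k134; exact: F_free_spine_eval_in134.
case: (eval _ _ _ phi) fst_b in134_val => c m /= -> in134_m.
split; first by exists m; case: m {in134_m}.
by move=> k134; exists m; split; [exact: in134_m|].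
Qed.
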